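(* Let $A\in\mathbb{R}^{n\times n}$ be Hurwitz (all eigenvalues with strictly negative real parts), let $C\in\mathbb{R}^{r\times n}$ be such that $(A,C)$ is observable, and let $P$ be the unique symmetric positive definite solution of $A^TP+PA+C^TC=0$. Let $Q\in\mathbb{R}^{n\times m}$ satisfy $Q^TQ=I_{m\times m}$. Then for every initial state $y(0)\in\mathbb{R}^n$, the solution $y(t)$ of $\dot y=Ay$ satisfies, for all $t\ge 0$, $$Q^Ty(t)\in\mathcal{E}\big(0,\ Q^TP^{-1}Q,\ \|y(0)\|_P\big).$$
   Context: $\|y\|_P=\sqrt{y^TPy}$. For $c\in\mathbb{R}^m$, a symmetric positive semidefinite $\Sigma\in\mathbb{R}^{m\times m}$ and $\rho\ge 0$, $\mathcal{E}(c,\Sigma,\rho)=\{c+\Sigma^{1/2}u: u\in\mathbb{R}^m,\ \|u\|\le\rho\}$ with $\Sigma^{1/2}$ the symmetric positive semidefinite square root. *)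

From mathcomp Require Import all_boot all_algebra.
From mathcomp Require Import all_classical all_reals all_analysis.
From mathcomp Require Import complex.
Import GRing.Theory Num.Theory numFieldNormedType.Exports.
Local Open Scope ring_scope.

Set Implicit Arguments.
Unset Strict Implicit.
Unset Printing Implicit Defensive.

Definition cplx_mx (R : realType) (m n : nat) (A : 'M[R]_(m, n)) : 'M[R[i]]_(m, n) :=
  map_mx (fun x : R => Complex x 0) A.

Definition hurwitz (R : realType) (n : nat) (A : 'M[R]_n) : Prop :=
  forall lam : R[i], eigenvalue (cplx_mx A) lam -> complex.Re lam < 0.

Definition obs_mx (R : realType) (n r : nat) (A : 'M[R]_n) (C : 'M[R]_(r, n)) :=
  \mxcol_(k < n) (C *m A ^+ k).

Definition observable (R : realType) (n r : nat) (A : 'M[R]_n) (C : 'M[R]_(r, n)) : Prop :=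
  \rank (obs_mx A C) = n.

Definition symmetric_mx (R : realType) (n : nat) (S : 'M[R]_n) : Prop := S^T = S.

Definition pos_def (R : realType) (n : nat) (S : 'M[R]_n) : Prop :=
  symmetric_mx S /\ forall x : 'cV[R]_n, x != 0 -> 0 < (x^T *m S *m x) 0 0.

Definition pos_semidef (R : realType) (n : nat) (S : 'M[R]_n) : Prop :=
  symmetric_mx S /\ forall x : 'cV[R]_n, 0 <= (x^T *m S *m x) 0 0.

Definition enorm (R : realType) (n : nat) (u : 'cV[R]_n) : R := Num.sqrt ((u^T *m u) 0 0).
Definition Pnorm (R : realType) (n : nat) (P : 'M[R]_n) (y : 'cV[R]_n) : R :=
  Num.sqrt ((y^T *m P *m y) 0 0).

Definition is_psd_sqrt (R : realType) (m : nat) (S Sigma : 'M[R]_m) : Prop :=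
  pos_semidef S /\ S *m S = Sigma.

Definition in_ellipsoid (R : realType) (m : nat) (c : 'cV[R]_m) (Sigma : 'M[R]_m) (rho : R)
  (z : 'cV[R]_m) : Prop :=
  exists S : 'M[R]_m, is_psd_sqrt S Sigma /\
    exists u : 'cV[R]_m, enorm u <= rho /\ z = c + S *m u.

(* Along a trajectory, V(y) = y^T P y satisfies dV/dt = -|C y|^2 <= 0 by the
   Lyapunov equation, so V(y(t)) <= V(y(0)).  For w = Q^T y and
   Sigma = Q^T P^-1 Q, completing the square gives
   y^T P y = w^T Sigma^-1 w + |P y - Q Sigma^-1 w|^2_{P^-1} >= w^T Sigma^-1 w.
   Finally Sigma is positive definite, so its psd square root S is invertible
   and u = S^-1 w satisfies |u|^2 = w^T Sigma^-1 w <= V(y(0)). *)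

From mathcomp Require Import all_boot all_algebra.
From mathcomp Require Import all_classical all_reals all_analysis.
From mathcomp Require Import complex.
From mathcomp Require Import ring.
Import order.Order.TTheory GRing.Theory Num.Theory numFieldNormedType.Exports.

Set Implicit Arguments.
Unset Strict Implicit.
Unset Printing Implicit Defensive.

Local Open Scope ring_scope.

Lemma exists_interp_poly (F : fieldType) (s : seq F) (f : F -> F) :
  exists p : {poly F}, {in s, forall x, p.[x] = f x}.
Proof.
elim: s => [|a s [p p_s]]; first by exists 0.
have [a_s|a_notin_s] := boolP (a \in s).
  by exists p => x; rewrite inE => /predU1P[->|]; apply: p_s.
pose w := \prod_(b <- s) ('X - b%:P).
have wa_neq0 : w.[a] != 0.
  rewrite horner_prod prodf_seq_neq0; apply/allP => b b_s /=.
  by rewrite hornerXsubC subr_eq0; apply: contraNneq a_notin_s => ->.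
exists (p + ((f a - p.[a]) / w.[a]) *: w) => x; rewrite inE hornerD hornerZ.
case/predU1P => [->|x_s]; first by rewrite divfK // addrC subrK.
rewrite [w.[x]]horner_prod (big_rem x) //= hornerXsubC subrr mul0r.
by rewrite mulr0 addr0 p_s.
Qed.

Lemma trmx_horner (R : comNzRingType) k (M : 'M[R]_k.+1) (p : {poly R}) :
  (horner_mx M p)^T = horner_mx M^T p.
Proof.
elim/poly_ind: p => [|p c IHp]; first by rewrite !rmorph0 trmx0.
rewrite !rmorphD !rmorphM /= !horner_mx_X !horner_mx_C raddfD /=.
rewrite -!mulmxE trmx_mul IHp tr_scalar_mx; congr (_ + _).
exact: comm_mx_horner.
Qed.

Lemma horner_mx_normal_eq0 (C : numClosedFieldType) k (M : 'M[C]_k.+1)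
    (p : {poly C}) :
  M \is normalmx -> (forall i, root p (spectral_diag M 0 i)) ->
  horner_mx M p = 0.
Proof.
move=> /orthomx_spectralP M_spectral p_d; rewrite [in LHS]M_spectral.
rewrite horner_mx_uconjC ?spectral_unit // horner_mx_diag.
suff -> : map_mx (horner p) (spectral_diag M) = 0 by rewrite linear0 mulmx0 mul0mx.
by apply/matrixP => i j; rewrite ord1 !mxE; apply/rootP.
Qed.

Section SpectralDiagonal.
Local Open Scope sesquilinear_scope.

Lemma Re_cplx_qform (R : realType) k (M : 'M[R]_k) (v : 'rV[R[i]]_k) :
  complex.Re ((v *m cplx_mx M *m v ^t*) 0 0) =
  (map_mx (@complex.Re R) v *m M *m (map_mx (@complex.Re R) v)^T) 0 0 +
  (map_mx (@complex.Im R) v *m M *m (map_mx (@complex.Im R) v)^T) 0 0.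
Proof.
rewrite !mxE raddf_sum -big_split /=; apply: eq_bigr => j _.
rewrite !mxE !big_distrl raddf_sum -big_split /=; apply: eq_bigr => l _.
by rewrite !mxE; case: (v 0 l) => a b; case: (v 0 j) => c e /=; ring.
Qed.

Lemma cplx_mx_hermsym (R : realType) k (M : 'M[R]_k) :
  symmetric_mx M -> cplx_mx M \is hermsymmx.
Proof.
move=> Msym; rewrite qualifE /= expr0 scale1r; apply/eqP/matrixP => i j.
by rewrite !mxE -[in RHS]Msym mxE; apply/esym/conjc_real.
Qed.

Lemma psd_spectral_diag_ge0 (R : realType) k (M : 'M[R]_k) i :
  pos_semidef M -> 0 <= spectral_diag (cplx_mx M) 0 i.
Proof.
case=> Msym Mpsd; have Mherm := cplx_mx_hermsym Msym.
set U := spectralmx (cplx_mx M); set d := spectral_diag (cplx_mx M).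
have d_real : d 0 i \is Num.real.
  by move/mxOverP: (hermitian_spectral_diag_real Mherm); apply.
have UM : U *m cplx_mx M = diag_mx d *m U.
  rewrite {1}(orthomx_spectralP (hermitian_normalmx Mherm)) -/U -/d.
  by rewrite !mulmxA mulmxV ?spectral_unit // mul1mx.
have dE : d 0 i = (row i U *m cplx_mx M *m (row i U)^t*) 0 0.
  have -> : row i U *m cplx_mx M = d 0 i *: row i U.
    by rewrite -row_mul UM row_mul row_diag_mx -scalemxAl -rowE.
  rewrite -scalemxAl mxE -dotmxE.
  have /row_unitarymxP /(_ i i) -> := spectral_unitarymx (cplx_mx M).
  by rewrite eqxx mulr1.
have Mpsd_row (v : 'rV[R]_k) : 0 <= (v *m M *m v^T) 0 0.
  by have := Mpsd v^T; rewrite trmxK.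
by rewrite -(RRe_real d_real) lecR dE Re_cplx_qform addr_ge0.
Qed.

End SpectralDiagonal.

Lemma tr_mulmx_self_ge0 (R : realFieldType) m n (u : 'M[R]_(m, n)) i :
  0 <= (u^T *m u) i i.
Proof. by rewrite mxE sumr_ge0 // => j _; rewrite !mxE -expr2 sqr_ge0. Qed.

Lemma psd_sqrt_exists (R : realType) k (M : 'M[R]_k) :
  pos_semidef M -> exists S, is_psd_sqrt S M.
Proof.
case: k M => [|k] M Mpsd.
  exists 0; split; last by apply/matrixP => -[].
  by split=> [|x]; [apply/matrixP => -[] | rewrite mulmx0 mul0mx mxE].
have [Msym _] := Mpsd; set d := spectral_diag (cplx_mx M).
have d_ge0 i : 0 <= d 0 i by apply: psd_spectral_diag_ge0.
have [q q_d] := exists_interp_poly [seq complex.Re (d 0 i) | i <- enum 'I_k.+1]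
  (fun x => Num.sqrt (Num.sqrt x)).
(* B := q(M) is a symmetric fourth root of M, so B^2 = B^T B is positive semidefinite *)
set B := horner_mx M q.
have B4 : B ^+ 4 = M.
  suff : horner_mx M (q ^+ 4 - 'X) = 0.
    by rewrite rmorphB rmorphXn /= horner_mx_X => /eqP; rewrite subr_eq0 => /eqP.
  apply: (@map_mx_inj _ _ (real_complex R)); rewrite map_mx0 map_horner_mx.
  apply: horner_mx_normal_eq0 => [|i].
    exact/hermitian_normalmx/cplx_mx_hermsym.
  rewrite -(RRe_real (ger0_real (d_ge0 i))) fmorph_root; apply/rootP.
  rewrite !hornerE q_d; last by apply: map_f; rewrite mem_enum.
  have Red_ge0 : 0 <= complex.Re (d 0 i).
    by have := d_ge0 i; rewrite lecE => /andP[].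
  by rewrite (_ : 4 = 2 * 2)%N // exprM !sqr_sqrtr ?sqrtr_ge0 // subrr.
have BT : B^T = B by rewrite trmx_horner Msym.
exists (B *m B); split; last by rewrite -B4 !mulmxE !exprS expr0 mulr1 !mulrA.
split=> [|x]; first by rewrite /symmetric_mx trmx_mul BT.
have -> : x^T *m (B *m B) *m x = (B *m x)^T *m (B *m x).
  by rewrite trmx_mul BT !mulmxA.
exact: tr_mulmx_self_ge0.
Qed.

Section PositiveDefinite.
Variables (R : realType) (n : nat).
Implicit Types P : 'M[R]_n.

Lemma pos_def_semidef P : pos_def P -> pos_semidef P.
Proof.
case=> Psym Ppd; split=> // x.
by have [->|/Ppd/ltW//] := eqVneq x 0; rewrite mulmx0 mxE.
Qed.

Lemma pos_def_unit P : pos_def P -> P \in unitmx.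
Proof.
case=> _ Ppd; rewrite unitmxE unitfE; apply/det0P => -[v v_neq0 vP].
suff : v^T != 0 by move/Ppd; rewrite trmxK vP mul0mx mxE ltxx.
by rewrite trmx_eq0.
Qed.

Lemma pos_def_invmx P : pos_def P -> pos_def (invmx P).
Proof.
move=> Ppd; have Pu := pos_def_unit Ppd; case: Ppd => Psym Ppd.
have PiT : (invmx P)^T = invmx P by rewrite trmx_inv Psym.
split=> // x x_neq0.
have -> : x^T *m invmx P *m x = (invmx P *m x)^T *m P *m (invmx P *m x).
  by rewrite trmx_mul PiT -!mulmxA (mulmxA P) mulmxV // mul1mx.
apply: Ppd; apply: contra x_neq0 => /eqP Pix0.
by rewrite -[x](mulKVmx Pu) Pix0 mulmx0.
Qed.

Lemma pos_def_congr m P (Q : 'M[R]_(n, m)) (L : 'M[R]_(m, n)) :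
  pos_def P -> L *m Q = 1%:M -> pos_def (Q^T *m P *m Q).
Proof.
case=> Psym Ppd LQ; split=> [|z z_neq0].
  by rewrite /symmetric_mx !trmx_mul trmxK Psym mulmxA.
have -> : z^T *m (Q^T *m P *m Q) *m z = (Q *m z)^T *m P *m (Q *m z).
  by rewrite trmx_mul !mulmxA.
apply: Ppd; apply: contra z_neq0 => /eqP Qz0.
by rewrite -[z]mul1mx -LQ -mulmxA Qz0 mulmx0.
Qed.

End PositiveDefinite.

Lemma qform_compress_le (R : realType) n m (P : 'M[R]_n) (Q : 'M[R]_(n, m))
    (y : 'cV[R]_n) :
  pos_def P -> Q^T *m invmx P *m Q \in unitmx ->
  ((Q^T *m y)^T *m invmx (Q^T *m invmx P *m Q) *m (Q^T *m y)) 0 0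
    <= (y^T *m P *m y) 0 0.
Proof.
move=> Ppd Sgu; have Pu := pos_def_unit Ppd.
have [PiT Pipsd] := pos_def_semidef (pos_def_invmx Ppd).
have PT : P^T = P by case: Ppd.
set Pi := invmx P in PiT Pipsd *; set Sg := Q^T *m Pi *m Q in Sgu *.
set Si := invmx Sg; set w := Q^T *m y; set v := Si *m w.
have SiT : Si^T = Si by rewrite trmx_inv /Sg !trmx_mul trmxK PiT mulmxA.
have Sgv : Sg *m v = w by rewrite mulKVmx.
have vT : v^T = w^T *m Si by rewrite trmx_mul SiT.
have wT : w^T = y^T *m Q by rewrite trmx_mul trmxK.
(* completing the square: the defect is the [P^-1]-form of [P y - Q v] *)
have -> : y^T *m P *m y = (P *m y - Q *m v)^T *m Pi *m (P *m y - Q *m v)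
                          + w^T *m Si *m w.
  rewrite [(_ - _)^T]linearB /= [(P *m y)^T]trmx_mul [(Q *m v)^T]trmx_mul PT.
  rewrite !(mulmxBl, mulmxBr).
  have -> : y^T *m P *m Pi *m (P *m y) = y^T *m P *m y.
    by rewrite -!mulmxA (mulmxA Pi) mulVmx // mul1mx.
  have -> : y^T *m P *m Pi *m (Q *m v) = w^T *m Si *m w.
    by rewrite -(mulmxA _ P) mulmxV // mulmx1 wT !mulmxA.
  have -> : v^T *m Q^T *m Pi *m (P *m y) = w^T *m Si *m w.
    by rewrite -!mulmxA (mulmxA Pi) mulVmx // mul1mx vT -!mulmxA.
  have -> : v^T *m Q^T *m Pi *m (Q *m v) = w^T *m Si *m w.
    by rewrite mulmxA -!(mulmxA v^T) -/Sg Sgv vT.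
  by rewrite opprB addrA subrK addrNK.
by rewrite [X in _ <= X]mxE ler_wpDl ?Pipsd.
Qed.

Lemma in_ellipsoid0_qform_le (R : realType) m (Sg : 'M[R]_m) (z : 'cV[R]_m) c :
  pos_def Sg -> (z^T *m invmx Sg *m z) 0 0 <= c ->
  in_ellipsoid 0 Sg (Num.sqrt c) z.
Proof.
move=> Sgpd zc.
have [S [[Ssym Spsd] SS]] := psd_sqrt_exists (pos_def_semidef Sgpd).
have Sgu := pos_def_unit Sgpd.
have Su : S \in unitmx by move: Sgu; rewrite -SS unitmx_mul => /andP[].
have invSS : invmx S *m invmx S = invmx Sg.
  rewrite -[LHS]mul1mx -(mulVmx Sgu) -SS -!mulmxA (mulmxA S (invmx S)).
  by rewrite mulmxV // mul1mx mulmxV // mulmx1.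
exists S; split; first by split.
exists (invmx S *m z); split; last by rewrite add0r mulKVmx.
rewrite /enorm ler_wsqrtr // (le_trans _ zc) // trmx_mul trmx_inv Ssym.
by rewrite -invSS !mulmxA.
Qed.

Local Open Scope classical_set_scope.

Section QuadraticForm.
Variables (R : realType) (n : nat) (M : 'M[R]_n).

Lemma bilinear_form_sumE (a b : 'cV[R]_n) :
  (a^T *m M *m b) 0 0 = \sum_(k < n) \sum_(j < n) M j k * a j 0 * b k 0.
Proof.
rewrite mxE; apply: eq_bigr => k _; rewrite mxE big_distrl /=.
by apply: eq_bigr => j _; rewrite !mxE [_ * M j k]mulrC.
Qed.

Lemma qform_fun_sumE (T : Type) (v : T -> 'cV[R]_n) :
  (fun s => ((v s)^T *m M *m v s) 0 0) =
  \sum_(k < n) \sum_(j < n) (fun s => M j k * v s j 0 * v s k 0).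
Proof.
apply/funext => s; rewrite bilinear_form_sumE !fct_sumE.
by apply: eq_bigr => k _; rewrite fct_sumE.
Qed.

Lemma continuous_qform : continuous (fun v : 'cV[R]_n => (v^T *m M *m v) 0 0).
Proof.
have coord_cont (v : 'cV[R]_n) i : {for v, continuous (fun s : 'cV[R]_n => s i 0)}.
  exact: coord_continuous.
have term_cont j k : continuous (fun s : 'cV[R]_n => M j k * s j 0 * s k 0).
  move=> v; have cst_cont := @cst_continuous _ _ (M j k) v.
  by have := continuousM (continuousM cst_cont (coord_cont v j)) (coord_cont v k).
move=> v; rewrite (qform_fun_sumE id).
elim/big_ind: _ => [|f g|k _]; [exact: cst_continuous | exact: continuousD |].
elim/big_ind: _ => [|f g|j _]; [exact: cst_continuous | exact: continuousD |].
exact: term_cont.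
Qed.

Lemma is_derive_qform (y : R -> 'cV[R]_n) (t : R) dy :
  is_derive t 1 y dy ->
  is_derive t 1 (fun s => ((y s)^T *m M *m y s) 0 0)
    ((dy^T *m M *m y t) 0 0 + ((y t)^T *m M *m dy) 0 0).
Proof.
move=> y_dy; have dery : derivable y t 1 by case: y_dy.
have entry_dy i : is_derive t 1 (fun s => y s i 0) (dy i 0).
  have deryi : derivable (fun s => y s i 0) t 1.
    by move/derivable_mxP: dery; apply.
  apply: (is_derive_eq (derivableP deryi)).
  by rewrite -(@derive_val _ _ _ _ _ _ _ y_dy) derive_mx // mxE.
have := is_derive_sum (fun k => is_derive_sum (fun j =>
  is_deriveM (is_deriveZ (M j k) (entry_dy j)) (entry_dy k))).
rewrite -qform_fun_sumE => /is_derive_eq; apply.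
rewrite !bilinear_form_sumE -big_split; apply: eq_bigr => k _.
rewrite -big_split; apply: eq_bigr => j _ /=.
by rewrite [in LHS]/GRing.scale /=; ring.
Qed.
End QuadraticForm.


Lemma lyapunov_qform_nonincreasing (R : realType) n r (A P : 'M[R]_n)
    (C : 'M[R]_(r, n)) (y : R -> 'cV[R]_n) :
  A^T *m P + P *m A + C^T *m C = 0 ->
  {within [set t : R | 0 <= t], continuous y} ->
  (forall t : R, 0 < t -> is_derive t 1 y (A *m y t)) ->
  forall t : R, 0 <= t -> ((y t)^T *m P *m y t) 0 0 <= ((y 0)^T *m P *m y 0) 0 0.
Proof.
move=> lyap y_cont y_der t t_ge0.
pose V s := ((y s)^T *m P *m y s) 0 0.
have V_der (s : R) : 0 < s -> is_derive s 1 V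
    (((A *m y s)^T *m P *m y s) 0 0 + ((y s)^T *m P *m (A *m y s)) 0 0).
  by move=> s_gt0; apply/is_derive_qform/y_der.
apply: (@ler0_derive1_nincry _ V 0) => // [s|s|].
- by rewrite in_itv /= andbT => /V_der [].
- rewrite in_itv /= andbT => s_gt0.
  rewrite derive1E (@derive_val _ _ _ _ _ _ _ (V_der s s_gt0)).
  set X := (A *m y s)^T *m P *m y s; set Y := (y s)^T *m P *m (A *m y s).
  have -> : X 0 0 + Y 0 0 = (X + Y) 0 0 by rewrite [in RHS]mxE.
  have -> : X + Y = - ((C *m y s)^T *m (C *m y s)).
    rewrite /X /Y trmx_mul -!mulmxA -mulmxDr !mulmxA -mulmxDl.
    have -> : A^T *m P + P *m A = - (C^T *m C) by apply/eqP; rewrite -addr_eq0 lyap.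
    by rewrite mulNmx mulmxN trmx_mul !mulmxA.
  by rewrite [Z in Z <= 0]mxE oppr_le0 tr_mulmx_self_ge0.
- rewrite set_itvcy => s.
  by have := continuous_comp (y_cont s) (@continuous_qform _ _ P (y s)).
Qed.

Theorem proposition13 (R : realType) (n r m : nat)
  (A : 'M[R]_n) (C : 'M[R]_(r, n)) (P : 'M[R]_n) (Q : 'M[R]_(n, m))
  (y : R -> 'cV[R]_n) :
  hurwitz A ->
  observable A C ->
  pos_def P ->
  A^T *m P + P *m A + C^T *m C = 0 ->
  Q^T *m Q = 1%:M ->
  {within [set t : R | 0 <= t], continuous y} ->
  (forall t : R, 0 < t -> is_derive t 1 y (A *m y t)) ->
  forall t : R, 0 <= t ->
    in_ellipsoid 0 (Q^T *m invmx P *m Q) (Pnorm P (y 0)) (Q^T *m y t).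
Proof.
(* Hurwitz stability and observability only make P exist. *)
move=> _ _ Ppd lyap QTQ y_cont y_der t t_ge0.
have Sgpd : pos_def (Q^T *m invmx P *m Q) := pos_def_congr (pos_def_invmx Ppd) QTQ.
apply: in_ellipsoid0_qform_le => //.
apply: le_trans (qform_compress_le (y t) Ppd (pos_def_unit Sgpd)) _.
exact: lyapunov_qform_nonincreasing lyap y_cont y_der t t_ge0.
Qed.
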